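(* Let $\{R_i\}_{i\in I}$ be a family of commutative rings with identity and $R=\prod_{i\in I}R_i$. The following are equivalent: (1) $R$ is almost complemented and $\mathfrak{N}(R)=\prod_{i\in I}\mathfrak{N}(R_i)$; (2) $R$ is almost complemented and $\mathrm{areg}(R)=\prod_{i\in I}\mathrm{areg}(R_i)$.
   Context: For a ring $A$, $\mathfrak{N}(A)$ is the nilradical, $\mathrm{reg}(A)$ the set of regular elements, and $\mathrm{areg}(A)=\{x\in A: x+\mathfrak{N}(A)\in\mathrm{reg}(A/\mathfrak{N}(A))\}$. $A$ is complemented if for every $a$ there is $b$ with $ab=0$ and $a+b\in\mathrm{reg}(A)$; $A$ is almost complemented if $A/\mathfrak{N}(A)$ is complemented. *)

From HB Require Import structures.
From mathcomp Require Import all_boot all_order all_algebra.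
From mathcomp Require Import boolp.

Set Implicit Arguments.
Unset Strict Implicit.
Unset Printing Implicit Defensive.

Import GRing.Theory.
Local Open Scope ring_scope.

Section RingNotions.
Variable A : comPzRingType.

Definition nilrad (x : A) : Prop := exists n : nat, x ^+ n = 0.

Definition regular (x : A) : Prop := forall y : A, x * y = 0 -> y = 0.

(** areg(A) = { x | x + N(A) is regular in A/N(A) }, written out:
    the class of y is zero in A/N(A) iff y \in N(A). *)
Definition areg (x : A) : Prop := forall y : A, nilrad (x * y) -> nilrad y.

Definition complemented : Prop :=
  forall a : A, exists b : A, a * b = 0 /\ regular (a + b).

(** A almost complemented: A/N(A) complemented, written out on
    representatives: for every a there is b with ab \in N(A) and
    (a + b) + N(A) regular in A/N(A), i.e. a + b \in areg(A). *)
Definition almost_complemented : Prop :=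
  forall a : A, exists b : A, nilrad (a * b) /\ areg (a + b).

End RingNotions.

Section Product.
Variables (I : Type) (R : I -> comPzRingType).

Definition prodR : Type := forall i : I, R i.

HB.instance Definition _ := gen_eqMixin prodR.
HB.instance Definition _ := gen_choiceMixin prodR.

Definition prod_zero : prodR := fun i => 0.
Definition prod_opp (x : prodR) : prodR := fun i => - x i.
Definition prod_add (x y : prodR) : prodR := fun i => x i + y i.
Definition prod_one : prodR := fun i => 1.
Definition prod_mul (x y : prodR) : prodR := fun i => x i * y i.

Lemma prod_addA : associative prod_add.
Proof. by move=> x y z; apply: functional_extensionality_dep => i; rewrite /prod_add addrA. Qed.
Lemma prod_addC : commutative prod_add.
Proof. by move=> x y; apply: functional_extensionality_dep => i; rewrite /prod_add addrC. Qed.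
Lemma prod_add0 : left_id prod_zero prod_add.
Proof. by move=> x; apply: functional_extensionality_dep => i; rewrite /prod_add add0r. Qed.
Lemma prod_addN : left_inverse prod_zero prod_opp prod_add.
Proof. by move=> x; apply: functional_extensionality_dep => i; rewrite /prod_add addNr. Qed.

HB.instance Definition _ :=
  GRing.isZmodule.Build prodR prod_addA prod_addC prod_add0 prod_addN.

Lemma prod_mulA : associative prod_mul.
Proof. by move=> x y z; apply: functional_extensionality_dep => i; rewrite /prod_mul mulrA. Qed.
Lemma prod_mulC : commutative prod_mul.
Proof. by move=> x y; apply: functional_extensionality_dep => i; rewrite /prod_mul mulrC. Qed.
Lemma prod_mul1 : left_id prod_one prod_mul.
Proof. by move=> x; apply: functional_extensionality_dep => i; rewrite /prod_mul mul1r. Qed.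
Lemma prod_mulDl : left_distributive prod_mul (+%R : prodR -> prodR -> prodR).
Proof. by move=> x y z; apply: functional_extensionality_dep => i; rewrite /prod_mul /= /prod_add mulrDl. Qed.

HB.instance Definition _ :=
  GRing.Zmodule_isComPzRing.Build prodR prod_mulA prod_mulC prod_mul1 prod_mulDl.

Lemma prodR_mulE (x y : prodR) (i : I) : (x * y) i = x i * y i.
Proof. by []. Qed.
Lemma prodR_addE (x y : prodR) (i : I) : (x + y) i = x i + y i.
Proof. by []. Qed.

End Product.

(** (1) -> (2): when the nilradical is coordinatewise, [x y] is nilpotent iff
    every [x i * y i] is; testing [areg x] against elements supported at a
    single coordinate then shows that [areg] is coordinatewise as well.
    (2) -> (1): given a coordinatewise nilpotent [x], pick [b] with [x b]
    nilpotent and [x + b] almost regular.  Each [b i] differs from the almost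
    regular [(x + b) i] by the nilpotent [x i], so it is almost regular; hence
    [b] is almost regular, and [x b] nilpotent forces [x] nilpotent. *)

From mathcomp Require Import all_boot all_order all_algebra.
From mathcomp Require Import boolp.
Import GRing.Theory.
Local Open Scope ring_scope.

Section Nilradical.
Variable A : comPzRingType.
Implicit Types a b c : A.

Lemma nilrad0 : nilrad (0 : A).
Proof. by exists 1%N; rewrite expr1. Qed.

Lemma nilradMl a c : nilrad a -> nilrad (c * a).
Proof. by case=> n an0; exists n; rewrite exprMn an0 mulr0. Qed.

Lemma nilradD a c : nilrad a -> nilrad c -> nilrad (a + c).
Proof.
case=> m am0 [n cn0]; exists (m + n)%N; rewrite exprDn big1 // => k _.
have [nk | kn] := leqP n k.
  by rewrite -(subnKC nk) exprD cn0 mul0r mulr0 mul0rn.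
by rewrite -addnBA ?(ltnW kn) // exprD am0 !mul0r mul0rn.
Qed.

Lemma areg_nilradDl a c : nilrad a -> areg (a + c) -> areg c.
Proof.
move=> nil_a areg_ac y nil_cy; apply: areg_ac.
by rewrite mulrDl; apply: nilradD => //; rewrite mulrC; apply: nilradMl.
Qed.

End Nilradical.

Section ProductRing.
Variables (I : Type) (R : I -> comPzRingType).
Implicit Types x y : prodR R.

Lemma prodR_exprE x i n : (x ^+ n) i = x i ^+ n.
Proof. by elim: n => // n IHn; rewrite !exprS prodR_mulE IHn. Qed.

Lemma nilrad_prodR_coord x i : nilrad x -> nilrad (x i).
Proof. by case=> n xn0; exists n; rewrite -prodR_exprE xn0. Qed.

Definition prod_single {i} (a : R i) : prodR R :=
  fun j => if pselect (i = j) is left e then eq_rect i R a j e else 0.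

Lemma prod_single_id {i} (a : R i) : prod_single a i = a.
Proof.
by rewrite /prod_single; case: pselect => // e; rewrite (Prop_irrelevance e erefl).
Qed.

Lemma mulr_prod_single x {i} (a : R i) : x * prod_single a = prod_single (x i * a).
Proof.
apply: functional_extensionality_dep => j; rewrite prodR_mulE /prod_single.
by case: pselect => [e | _]; [case: j / e | rewrite mulr0].
Qed.

Lemma nilrad_prod_single {i} (a : R i) j : nilrad a -> nilrad (prod_single a j).
Proof.
by rewrite /prod_single; case: pselect => [e | _ _]; [case: j / e | apply: nilrad0].
Qed.

Hypothesis nilrad_coord : forall x, nilrad x <-> forall i, nilrad (x i).

Lemma areg_prodR_coord x i : areg x -> areg (x i).
Proof.
move=> areg_x a nil_xa; rewrite -(prod_single_id a).
apply/nilrad_prodR_coord/areg_x/nilrad_coord => j.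
by rewrite mulr_prod_single; apply: nilrad_prod_single.
Qed.

Lemma areg_prodR x : (forall i, areg (x i)) -> areg x.
Proof.
move=> areg_x y /nilrad_coord nil_xy; apply/nilrad_coord => i.
exact/areg_x/nil_xy.
Qed.

End ProductRing.

Lemma nilrad_prodR (I : Type) (R : I -> comPzRingType) (x : prodR R) :
    almost_complemented (prodR R) ->
    (forall y : prodR R, areg y <-> (forall i, areg (y i))) ->
  (forall i, nilrad (x i)) -> nilrad x.
Proof.
move=> ac_R areg_coord nil_x; have [b [nil_xb areg_xb]] := ac_R x.
have areg_b : areg b.
  apply/areg_coord => i; apply: areg_nilradDl (nil_x i) _.
  by move/areg_coord: areg_xb; apply.
by apply: areg_b; rewrite mulrC.
Qed.

Theorem mainTheorem10 (I : Type) (R : I -> comPzRingType) :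
  (almost_complemented (prodR R) /\
     (forall x : prodR R, nilrad x <-> (forall i : I, nilrad (x i)))) <->
  (almost_complemented (prodR R) /\
     (forall x : prodR R, areg x <-> (forall i : I, areg (x i)))).
Proof.
split=> -[ac_R coord]; split=> // x; split.
- by move=> areg_x i; apply: areg_prodR_coord.
- exact: areg_prodR.
- by move=> nil_x i; apply: nilrad_prodR_coord.
- exact: nilrad_prodR.
Qed.
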